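(* Let $p$ be a prime, $k=\mathbb{F}_p$, and $V$ (the additive group of) a $k$-vector space of infinite dimension. Define $\widehat{V}^{[1]}=\widehat V$ and $\widehat V^{[i+1]}=\widehat{\widehat V^{[i]}}$, with profinite projections $\widehat\pi^{[1]}:V\to\widehat V^{[1]}$ and $\widehat\pi^{[i+1]}:\widehat V^{[i]}\to\widehat V^{[i+1]}$. Then for every $i\geq 1$, $\widehat\pi^{[i]}$ is an injective but non-surjective group homomorphism.
   Context: A finite approximation of a group $G$ is a pair $\mathbf{v}=(F_{\mathbf{v}},\varphi_{\mathbf{v}})$ with $F_{\mathbf{v}}$ a finite group and $\varphi_{\mathbf{v}}:G\to F_{\mathbf{v}}$ a group homomorphism; a morphism $f:\mathbf{v}\to\mathbf{v}'$ is a group homomorphism $f:F_{\mathbf{v}}\to F_{\mathbf{v}'}$ with $f\circ\varphi_{\mathbf{v}}=\varphi_{\mathbf{v}'}$. The profinite completion of $G$ is $\widehat{G}=\{(g_{\mathbf{v}})_{\mathbf{v}}\in\prod_{\mathbf{v}}F_{\mathbf{v}} : \psi(g_{\mathbf{v}})=g_{\mathbf{w}} \text{ for every morphism } \psi:\mathbf{v}\to\mathbf{w}\}$, the product over all finite approximations of $G$ (set-theoretic size issues ignored), with componentwise group law; the profinite projection is $\widehat{\pi}:G\to\widehat G$, $g\mapsto(\varphi_{\mathbf{v}}(g))_{\mathbf{v}}$. All completions here are of abstract groups (no topology). *)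

From mathcomp Require Import all_boot all_algebra.
From Stdlib Require Import FunctionalExtensionality ProofIrrelevance.
Import GRing.Theory.

Set Implicit Arguments.
Unset Strict Implicit.
Unset Printing Implicit Defensive.

Record GrpStr (T : Type) := GrpStr_ {
  gmul : T -> T -> T;
  gone : T;
  ginv : T -> T;
  gmulA : forall x y z, gmul x (gmul y z) = gmul (gmul x y) z;
  gmul1l : forall x, gmul gone x = x;
  gmul1r : forall x, gmul x gone = x;
  gmulVl : forall x, gmul (ginv x) x = gone;
  gmulVr : forall x, gmul x (ginv x) = gone }.

Record Group := Group_ { carrier :> Type; gstr : GrpStr carrier }.

Definition is_hom (A B : Type) (sA : GrpStr A) (sB : GrpStr B) (f : A -> B) :=
  forall x y, f (gmul sA x y) = gmul sB (f x) (f y).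

Lemma hom1 (A B : Type) (sA : GrpStr A) (sB : GrpStr B) (f : A -> B) :
  is_hom sA sB f -> f (gone sA) = gone sB.
Proof.
move=> hf; have e : f (gone sA) = gmul sB (f (gone sA)) (f (gone sA)).
  by rewrite -hf gmul1l.
rewrite -[LHS](gmul1l sB) -(gmulVl sB (f (gone sA))) -gmulA -e.
by rewrite gmulVl.
Qed.

Lemma homV (A B : Type) (sA : GrpStr A) (sB : GrpStr B) (f : A -> B) x :
  is_hom sA sB f -> f (ginv sA x) = ginv sB (f x).
Proof.
move=> hf; have e : gmul sB (f (ginv sA x)) (f x) = gone sB.
  by rewrite -hf gmulVl (hom1 hf).
rewrite -[LHS](gmul1r sB) -(gmulVr sB (f x)) gmulA e gmul1l //.
Qed.

(* A finite approximation of G: a finite group, represented (up to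
   isomorphism) with carrier 'I_n, together with a homomorphism G -> F. *)
Record FinApprox (G : Group) := FinApprox_ {
  fa_n : nat;
  fa_str : GrpStr 'I_fa_n;
  fa_phi : G -> 'I_fa_n;
  fa_hom : is_hom (gstr G) fa_str fa_phi }.

Definition compatible (G : Group) (x : forall v : FinApprox G, 'I_(fa_n v)) : Prop :=
  forall (v w : FinApprox G) (f : 'I_(fa_n v) -> 'I_(fa_n w)),
    is_hom (fa_str v) (fa_str w) f ->
    (forall g, f (fa_phi v g) = fa_phi w g) ->
    f (x v) = x w.

Definition hat_car (G : Group) := {x : forall v : FinApprox G, 'I_(fa_n v) | compatible x}.

Lemma hat_eq (G : Group) (x y : hat_car G) :
  (forall v, proj1_sig x v = proj1_sig y v) -> x = y.
Proof.
case: x => x hx; case: y => y hy /= e.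
have exy : x = y by apply: functional_extensionality_dep.
subst y; f_equal; apply: proof_irrelevance.
Qed.

Section Hat.
Variable G : Group.

Definition hat_mul (x y : hat_car G) : hat_car G.
Proof.
exists (fun v => gmul (fa_str v) (proj1_sig x v) (proj1_sig y v)).
move=> v w f hf hc; rewrite hf (proj2_sig x v w f hf hc) (proj2_sig y v w f hf hc) //.
Defined.

Definition hat_one : hat_car G.
Proof.
exists (fun v => gone (fa_str v)).
move=> v w f hf _; exact: hom1 hf.
Defined.

Definition hat_inv (x : hat_car G) : hat_car G.
Proof.
exists (fun v => ginv (fa_str v) (proj1_sig x v)).
move=> v w f hf hc; rewrite (homV _ hf) (proj2_sig x v w f hf hc) //.
Defined.

Definition hat_str : GrpStr (hat_car G).
Proof.
apply: (@GrpStr_ _ hat_mul hat_one hat_inv).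
- by move=> x y z; apply: hat_eq => v /=; rewrite gmulA.
- by move=> x; apply: hat_eq => v /=; rewrite gmul1l.
- by move=> x; apply: hat_eq => v /=; rewrite gmul1r.
- by move=> x; apply: hat_eq => v /=; rewrite gmulVl.
- by move=> x; apply: hat_eq => v /=; rewrite gmulVr.
Defined.

Definition hat : Group := Group_ hat_str.

Definition hatPi (g : G) : hat :=
  exist (fun x => compatible x) (fun v => fa_phi v g) (fun v w f _ hc => hc g).

End Hat.

Fixpoint hatIter (G : Group) (i : nat) : Group :=
  match i with
  | 0 => G
  | i'.+1 => hat (hatIter G i')
  end.

Definition addGrpStr (V : zmodType) : GrpStr V :=
  @GrpStr_ V +%R 0%R (fun x => - x)%R (@addrA V) (@add0r V) (@addr0 V) (@addNr V) (@subrr V).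

Definition addGroup (V : zmodType) : Group := Group_ (addGrpStr V).

Definition infinite_dim (K : nzRingType) (V : lmodType K) : Prop :=
  ~ exists (n : nat) (e : 'I_n -> V),
      forall x : V, exists c : 'I_n -> K, x = (\sum_(i < n) c i *: e i)%R.

From HB Require Import structures.
From Pilot Require Import Defs.
From mathcomp Require Import all_boot all_algebra.
From mathcomp Require Import boolp classical_sets functions filter.
Import GRing.Theory.

(* Injectivity: on V the F_p-valued linear forms separate points (a Zorn argument),
   and each of them is a finite approximation; on a completion hat G the coordinate
   projections are themselves finite approximations of hat G.
   Non-surjectivity: an infinite-dimensional V has a dual sequence, i.e. vectors a_n
   and F_p-valued characters f_m with f_m (a_n) = [m == n], and hatPi transports dual
   sequences from G to hat G.  Given one in G, the limit of hatPi (a_n) along a free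
   ultrafilter is a point of hat G.  Were it hatPi g, every f_m would vanish at g;
   but composing x |-> (f_m x)_m with a linear form on F_p^nat equal to 1 on all unit
   vectors gives a character that is 1 on every a_n and 0 at g, and evaluating the
   limit at that character yields 0 = 1. *)

Local Open Scope ring_scope.
Local Open Scope classical_set_scope.

Section Ultralimit.
Context (U : set_system nat) {UF : UltraFilter U}.

Lemma ultra_fiber {T : finType} (s : nat -> T) : exists c, U [set k | s k = c].
Proof.
suff fiber_in (l : seq T) : U [set k | s k \in l] -> exists c, U [set k | s k = c].
  by apply: (fiber_in (enum T)); apply: filterS filterT => k _; exact: (@mem_enum T predT).
elim: l => [|c l IHl] Ul; first by have [k] := filter_ex Ul.
have [Uc|Unc] := in_ultra_setVsetC [set k | s k = c] UF; first by exists c.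
apply: IHl; apply: filterS (filterI Ul Unc) => k [/=].
by rewrite in_cons => /orP[/eqP|].
Qed.

Definition ulim {T : finType} (s : nat -> T) : T := sval (cid (ultra_fiber s)).

Lemma ulimP {T : finType} (s : nat -> T) : U [set k | s k = ulim s].
Proof. exact: svalP (cid (ultra_fiber s)). Qed.

Lemma ulim_near {T : finType} (s : nat -> T) c : U [set k | s k = c] -> ulim s = c.
Proof. by move=> Uc; have [k [<- ->]] := filter_ex (filterI (ulimP s) Uc). Qed.

Lemma ulim_comp {T T' : finType} (f : T -> T') (s : nat -> T) (t : nat -> T') :
  (forall k, t k = f (s k)) -> ulim t = f (ulim s).
Proof. by move=> tE; apply: ulim_near; apply: filterS (ulimP s) => k /= <-. Qed.

Hypothesis U_eventually : \oo `<=` U.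

Lemma ulim_eventually {T : finType} (s : nat -> T) c :
  (\forall k \near \oo, s k = c) -> ulim s = c.
Proof. by move=> /U_eventually; apply: ulim_near. Qed.

End Ultralimit.

Lemma Zorn_bigcup_ge (T : Type) (P : set (set T)) (B : set T) :
  P B ->
  (forall F, F `<=` P -> F !=set0 -> total_on F subset -> P (\bigcup_(X in F) X)) ->
  exists A, [/\ B `<=` A, P A & forall C, A `<` C -> ~ P C].
Proof.
move=> PB Pchain.
(* Working with B `|` S makes the empty chain harmless. *)
have [S [PBS Smax]] : exists S, P (B `|` S) /\ forall C, S `<` C -> ~ P (B `|` C).
  apply: Zorn_bigcup => F FP Ftot.
  have [->|/set0P F_neq0] := eqVneq F set0; first by rewrite bigcup_set0 setU0.
  rewrite -bigcupUr // -(bigcup_image F (setU B) id).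
  apply: Pchain; first by move=> _ [X FX <-]; apply: FP.
    by case: F_neq0 => X FX; exists (B `|` X), X.
  move=> _ _ [X FX <-] [Y FY <-].
  by case: (Ftot X Y FX FY) => [XY|YX]; [left|right]; apply: setUS.
exists (B `|` S); split=> [|//|C [BSC CBS] PC]; first exact: subsetUl.
apply: (Smax C); last by rewrite (setUidPr _ _).2 // => x Bx; apply: BSC; left.
by split=> [x Sx|CS]; [apply: BSC; right | apply: CBS => x /CS; right].
Qed.

Section LinearSeparation.
Context {K : fieldType} {V : lmodType K}.

Definition subspace (S : set V) := S 0 /\ forall a u v, S u -> S v -> S (a *: u + v).

Lemma subspaceZ S a u : subspace S -> S u -> S (a *: u).
Proof. by case=> S0 SZD Su; rewrite -[_ *: u]addr0; apply: SZD. Qed.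

Lemma subspaceB S u v : subspace S -> S u -> S v -> S (u - v).
Proof. by case=> S0 SZD Su Sv; rewrite addrC -scaleN1r; apply: SZD. Qed.

Lemma ex_maximal_subspace {B : set V} {x : V} : subspace B -> ~ B x ->
  exists M, [/\ B `<=` M, subspace M, ~ M x &
    forall v, ~ M v -> exists m c, M m /\ x = m + c *: v].
Proof.
move=> Bsub Bx.
have [|M [BM [Msub Mx] Mmax]] :=
  @Zorn_bigcup_ge _ (fun S => subspace S /\ ~ S x) B (conj Bsub Bx).
  move=> F FP [X0 FX0] Ftot; split; first split.
  - by exists X0 => //; case: (FP X0 FX0) => -[].
  - move=> a u v [X FX Xu] [Y FY Yv].
    have [XY|YX] := Ftot X Y FX FY; [exists Y | exists X] => //.
      by case: (FP Y FY) => -[_ YZD] _; apply: YZD => //; apply: XY.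
    by case: (FP X FX) => -[_ XZD] _; apply: XZD => //; apply: YX.
  - by move=> [X FX Xx]; case: (FP X FX) => _; apply.
exists M; split=> // v Mv.
pose C := [set w | exists m c, M m /\ w = m + c *: v].
apply: contrapT => Cx; apply: (Mmax C); last split.
- split=> [m Mm|CM]; first by exists m, 0; rewrite scale0r addr0.
  by apply: Mv; apply: CM; exists 0, 1; rewrite scale1r add0r; case: Msub.
- split; first by exists 0, 0; rewrite scale0r addr0; case: Msub.
  move=> a _ _ [m [c [Mm ->]]] [m' [c' [Mm' ->]]].
  exists (a *: m + m'), (a * c + c'); split; first by case: Msub => _; apply.
  by rewrite scalerDr scalerDl scalerA addrACA.
- exact: Cx.
Qed.

Section MaximalSubspace.
Context {M : set V} {x : V}.
Hypotheses (Msub : subspace M) (Mx : ~ M x)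
  (Mmax : forall v, ~ M v -> exists m c, M m /\ x = m + c *: v).

Lemma maximal_coord v : exists c, M (v - c *: x).
Proof.
have [Mv|/Mmax[m [c [Mm xE]]]] := pselect (M v).
  by exists 0; rewrite scale0r subr0.
have c_neq0 : c != 0 by apply/eqP => c0; apply: Mx; rewrite xE c0 scale0r addr0.
exists c^-1; rewrite xE scalerDr scalerA mulVf // scale1r opprD addrCA subrr addr0.
by rewrite -scaleNr; apply: subspaceZ.
Qed.

Lemma maximal_coord_uniq {v c c'} : M (v - c *: x) -> M (v - c' *: x) -> c = c'.
Proof.
move=> Mc Mc'; have Mcc' : M ((c - c') *: x).
  have -> : (c - c') *: x = (v - c' *: x) - (v - c *: x).
    by rewrite opprB [RHS]addrC [RHS]addrA subrK scalerBl.
  exact: subspaceB.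
have [//|neq] := eqVneq c c'; exfalso; apply: Mx.
rewrite -[x]scale1r -(@mulVf _ (c - c')) ?subr_eq0 // -scalerA.
exact: subspaceZ.
Qed.

Lemma maximal_codim1 : exists h : {scalar V}, (forall m, M m -> h m = 0) /\ h x = 1.
Proof.
have [h hP] := choice maximal_coord.
have h_scalar : scalar h.
  move=> a u v; apply: (maximal_coord_uniq (hP _)).
  rewrite scalerDl opprD -scalerA addrACA -scalerBr.
  by case: Msub => _; apply.
pose hL : {scalar V} := HB.pack h (GRing.isLinear.Build K V K *%R h h_scalar).
exists hL; split=> [m Mm|].
  by apply: (maximal_coord_uniq (hP m)); rewrite scale0r subr0.
by apply: (maximal_coord_uniq (hP x)); rewrite scale1r subrr; case: Msub.
Qed.

End MaximalSubspace.

Theorem linear_separation {B : set V} {x : V} : subspace B -> ~ B x ->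
  exists h : {scalar V}, (forall b, B b -> h b = 0) /\ h x = 1.
Proof.
move=> Bsub Bx; have [M [BM Msub Mx Mmax]] := ex_maximal_subspace Bsub Bx.
have [h [hM hx]] := maximal_codim1 Msub Mx Mmax.
by exists h; split=> // b /BM; apply: hM.
Qed.

End LinearSeparation.

Lemma dependent_choice_seq {T : Type} (R : seq T -> T -> Prop) :
  (forall s, exists x, R s x) -> exists u : nat -> T, forall n, R (mkseq u n) (u n).
Proof.
move=> /choice[next nextP].
pose fix prefix n := if n is n'.+1 then rcons (prefix n') (next (prefix n')) else [::].
exists (fun n => next (prefix n)) => n.
suff -> : mkseq (fun n => next (prefix n)) n = prefix n by [].
by elim: n => //= n IHn; rewrite mkseqS IHn.
Qed.

Section DualBasis.
Context {K : fieldType} {V : lmodType K}.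

Definition biorthogonal (s : seq (V * {scalar V})) :=
  forall i j, (i < size s)%N -> (j < size s)%N ->
    (nth (0, \0 : {scalar V}) s i).2 (nth (0, \0 : {scalar V}) s j).1 = (i == j)%:R.

Lemma biorthogonal_rcons {s} : infinite_dim V -> biorthogonal s ->
  exists q, biorthogonal (rcons s q).
Proof.
move=> Vinf s_bio; set n := size s.
pose e (i : 'I_n) := (nth (0, \0 : {scalar V}) s i).1.
pose f (i : 'I_n) := (nth (0, \0 : {scalar V}) s i).2.
pose span := [set v | exists c : 'I_n -> K, v = \sum_(i < n) c i *: e i].
have span_sub : subspace span.
  split; first by exists (fun=> 0); rewrite big1 // => i _; rewrite scale0r.
  move=> a _ _ [c ->] [c' ->]; exists (fun i => a * c i + c' i).
  by rewrite scaler_sumr -big_split; apply: eq_bigr => i _; rewrite scalerA scalerDl.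
have e_span j : span (e j).
  exists (fun k => (k == j)%:R); rewrite (bigD1 j) //= eqxx scale1r big1 ?addr0 //.
  by move=> k /negbTE ->; rewrite scale0r.
have [z z_span] : exists z, ~ span z.
  apply: contrapT => all_span; apply: Vinf; exists n, e => v.
  by apply: contrapT => v_span; apply: all_span; exists v.
pose y := z - \sum_(i < n) f i z *: e i.
have y_span : ~ span y.
  move=> [c yE]; apply: z_span; exists (fun i => c i + f i z).
  under eq_bigr do rewrite scalerDl.
  by rewrite big_split /= -yE /y subrK.
have f_y (i : 'I_n) : f i y = 0.
  rewrite linearB linear_sum /= (bigD1 i) //= big1 => [|k ki].
    by rewrite linearZ /= s_bio // eqxx mulr1 addr0 subrr.
  by rewrite linearZ /= s_bio // val_eqE eq_sym (negbTE ki) mulr0.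
have [h [h_span hy]] := linear_separation span_sub y_span.
exists (y, h) => i j; rewrite !size_rcons !ltnS !nth_rcons -/n.
rewrite leq_eqVlt => /orP[/eqP-> | ltin]; rewrite leq_eqVlt => /orP[/eqP-> | ltjn].
- by rewrite ltnn eqxx.
- by rewrite ltnn eqxx ltjn (gtn_eqF ltjn) /=; apply: (h_span _ (e_span (Ordinal ltjn))).
- by rewrite ltin ltnn eqxx (ltn_eqF ltin); apply: (f_y (Ordinal ltin)).
- by rewrite ltin ltjn; apply: s_bio.
Qed.

Lemma dual_basis_seq : infinite_dim V ->
  exists (e : nat -> V) (f : nat -> {scalar V}), forall m n, f m (e n) = (m == n)%:R.
Proof.
move=> Vinf.
have [u u_bio] : exists u : nat -> V * {scalar V},
    forall n, biorthogonal (mkseq u n) -> biorthogonal (rcons (mkseq u n) (u n)).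
  apply: (dependent_choice_seq (fun s q => biorthogonal s -> biorthogonal (rcons s q))).
  move=> s; have [/(biorthogonal_rcons Vinf)[q s_bio]|s_nbio] := pselect (biorthogonal s).
    by exists q.
  by exists (0, \0 : {scalar V}) => /s_nbio.
have bio_n n : biorthogonal (mkseq u n).
  elim: n => [i j|n IHn]; first by rewrite ltn0.
  by rewrite mkseqS; apply: u_bio.
exists (fun n => (u n).1), (fun m => (u m).2) => m n.
have lt_m : (m < (maxn m n).+1)%N by rewrite ltnS leq_maxl.
have lt_n : (n < (maxn m n).+1)%N by rewrite ltnS leq_maxr.
by have := bio_n (maxn m n).+1 m n; rewrite size_mkseq !nth_mkseq //; apply.
Qed.

End DualBasis.

Lemma ex_scalar_one_on_deltas (K : fieldType) :
  exists h : {scalar nat -> K^o}, forall n, h (fun m => (m == n)%:R) = 1.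
Proof.
pose delta n : nat -> K^o := fun m => (m == n)%:R.
have sum_delta n N : (n < N)%N -> \sum_(m < N) delta n m = 1.
  move=> ltnN; rewrite (bigD1 (Ordinal ltnN)) //= /delta eqxx big1 ?addr0 // => m.
  by rewrite -val_eqE /= => /negbTE ->.
(* h will extend the sum of finitely supported sequences. *)
pose B := [set b : nat -> K^o | \forall N \near \oo, b N = 0 /\ \sum_(m < N) b m = 0].
have Bsub : subspace B.
  split; first by near=> N; split => //; rewrite big1.
  move=> c u v Bu Bv; near=> N.
  have [uN usum] : u N = 0 /\ \sum_(m < N) u m = 0 by near: N.
  have [vN vsum] : v N = 0 /\ \sum_(m < N) v m = 0 by near: N.
  split; first by rewrite !fctE uN vN scaler0 addr0.
  rewrite (eq_bigr (fun m : 'I_N => c *: u m + v m)) => [|m _]; last by rewrite !fctE.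
  by rewrite big_split -scaler_sumr usum vsum scaler0; apply: addr0.
have delta0_B : ~ B (delta 0%N).
  move=> B0; suff : \forall N \near \oo, False by move=> /filter_ex [].
  near=> N; have [_] : delta 0%N N = 0 /\ \sum_(m < N) delta 0%N m = 0 by near: N.
  rewrite sum_delta => [/eqP|]; first by rewrite oner_eq0.
  by near: N; exists 1%N.
have deltaB n : B (delta n - delta 0%N).
  near=> N; have ltnN : (n < N)%N by near: N; exists n.+1.
  have lt0N : (0 < N)%N := leq_ltn_trans (leq0n n) ltnN.
  split; first by rewrite !fctE /delta (gtn_eqF ltnN) (gtn_eqF lt0N) subrr.
  rewrite (eq_bigr (fun m : 'I_N => delta n m - delta 0%N m)) //.
  by rewrite sumrB !sum_delta //; apply: subrr.
have [h [hB h0]] := linear_separation Bsub delta0_B.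
exists h => n; have := hB _ (deltaB n).
by rewrite raddfB => /subr0_eq e; apply: etrans e h0.
Unshelve. all: by end_near.
Qed.

Definition Fp_character (p : nat) {G : Defs.Group} (psi : G -> 'F_p) :=
  is_hom (gstr G) (addGrpStr 'F_p) psi.

Definition char_approx {p : nat} {G : Defs.Group} {psi : G -> 'F_p}
  (psi_char : Fp_character p psi) : FinApprox G := FinApprox_ psi_char.

Definition has_dual_seq (p : nat) (G : Defs.Group) :=
  exists (a : nat -> G) (f : nat -> G -> 'F_p),
    (forall m, Fp_character p (f m)) /\ forall m n, f m (a n) = (m == n)%:R.

Lemma hatPi_is_hom (G : Defs.Group) : is_hom (gstr G) (gstr (hat G)) (@hatPi G).
Proof. by move=> x y; apply: hat_eq => v /=; apply: fa_hom. Qed.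

Lemma hatPi_hat_inj (G : Defs.Group) : injective (@hatPi (hat G)).
Proof.
move=> x y xy; apply: hat_eq => v.
(* The v-th coordinate is a finite approximation of hat G. *)
pose w := FinApprox_ (fun x y : hat G => erefl : proj1_sig (hat_mul x y) v = _).
exact: (congr1 (fun z => proj1_sig z w) xy).
Qed.

Lemma hatPi_addGroup_inj (p : nat) (V : lmodType 'F_p) : injective (@hatPi (addGroup V)).
Proof.
move=> x y xy.
apply/eqP; rewrite -subr_eq0; apply/eqP; apply: contrapT => xy_neq0.
have [|h [_ hxy]] := @linear_separation _ _ [set 0] (x - y) _ xy_neq0.
  by split=> // a _ _ -> ->; rewrite scaler0 addr0.
have h_char : @Fp_character p (addGroup V) h := raddfD h.
have hxhy : h x = h y := congr1 (fun z => proj1_sig z (char_approx h_char)) xy.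
by move: hxy; rewrite linearB hxhy subrr => /eqP; rewrite eq_sym oner_eq0.
Qed.

Lemma has_dual_seq_addGroup (p : nat) (V : lmodType 'F_p) :
  infinite_dim V -> has_dual_seq p (addGroup V).
Proof.
move=> /dual_basis_seq[e [f ef]].
by exists e, (fun m => f m); split=> // m; apply: raddfD.
Qed.

Lemma has_dual_seq_hat (p : nat) (G : Defs.Group) :
  has_dual_seq p G -> has_dual_seq p (hat G).
Proof.
move=> [a [f [f_char fa]]].
by exists (fun n => hatPi (a n)), (fun m x => proj1_sig x (char_approx (f_char m))).
Qed.

Section UltralimitPoint.
Context {G : Defs.Group} (U : set_system nat) {UF : UltraFilter U}.

Lemma ulim_compatible (a : nat -> G) :
  compatible (fun v : FinApprox G => ulim U (fun n => fa_phi v (a n))).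
Proof. by move=> v w f _ fE; apply/esym/ulim_comp => k; rewrite fE. Qed.

Definition ulim_hat (a : nat -> G) : hat G := exist _ _ (ulim_compatible a).

End UltralimitPoint.

Lemma hatPi_not_surj (p : nat) (G : Defs.Group) :
  has_dual_seq p G -> ~ (forall y : hat G, exists x, hatPi x = y).
Proof.
move=> [a [f [f_char fa]]].
have [U [UF Uoo]] := ultraFilterLemma (F := \oo) _.
move=> /(_ (ulim_hat U a)) [g ga].
have char_g psi (psi_char : Fp_character p psi) : psi g = ulim U (fun n => psi (a n)).
  exact: (congr1 (fun y => proj1_sig y (char_approx psi_char)) ga).
have fg m : f m g = 0.
  rewrite (char_g _ (f_char m)); apply: ulim_eventually => //.
  by exists m.+1 => // k /= mk; rewrite fa (ltn_eqF mk).
have [h h_delta] := ex_scalar_one_on_deltas 'F_p.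
pose Phi (x : G) : nat -> ('F_p)^o := fun m => f m x.
have hPhi_char : Fp_character p (h \o Phi).
  move=> x y /=; rewrite -raddfD; apply: congr1; apply: funext => m; exact: f_char.
have := char_g _ hPhi_char.
have -> : (h \o Phi) g = 0 by rewrite /= [Phi g](_ : _ = 0) ?raddf0 //; apply: funext.
have -> : ulim U (fun n => (h \o Phi) (a n)) = 1.
  apply: ulim_eventually => //; apply: nearW => n /=.
  by rewrite -(h_delta n); apply: congr1; apply: funext => m; exact: fa.
by move/eqP; rewrite eq_sym oner_eq0.
Qed.

Theorem mainTheorem5 (p : nat) (p_prime : prime p) (V : lmodType 'F_p)
  (hV : infinite_dim V) :
  forall i : nat, (1 <= i)%N ->
    let G := hatIter (addGroup V) i.-1 in
    is_hom (gstr G) (gstr (hat G)) (@hatPi G) /\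
    injective (@hatPi G) /\
    ~ (forall y : hat G, exists x : G, hatPi x = y).
Proof.
case=> // i _ G; split; first exact: hatPi_is_hom.
have G_dual : has_dual_seq p G.
  by elim: i @G => [|i IHi] /=; [apply: has_dual_seq_addGroup | apply: has_dual_seq_hat].
split; last exact: hatPi_not_surj G_dual.
by case: i @G {G_dual} => [|i] /=; [apply: hatPi_addGroup_inj | apply: hatPi_hat_inj].
Qed.
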